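(* Consider a sequence of local public good games as described in the context with number of players $n\to\infty$, and suppose Assumption 1 holds. Let $\omega>0$ be a scalar such that $w_i\le\omega$ for all players $i$ in all games of the sequence. Then for every choice of sociable Nash equilibria $(x^*,y^*,g^* )$ of these games, the size of the core satisfies $\lim_{n\to\infty}|\mathcal C(g^* )|/n=0$.
   Context: There is a finite set of players $N=\{1,\dots,n\}$. Each player $i$ chooses a public good provision $x_i\ge 0$, a private good consumption $y_i\ge 0$, and links $g_i=(g_{i1},\dots,g_{in})\in\{0,1\}^n$ with $g_{ii}=0$; $g_{ij}=1$ means $i$ links to $j$. Let $\eta_i(g)=|\{j:g_{ij}=1\}|$. Each link costs its sponsor $k>0$ (fixed along the sequence). Player $i$'s spillovers are $\bar x_{-i}=\sum_{j}g_{ij}x_j$ and her public good consumption is $\bar x_i=x_i+\bar x_{-i}$. Player $i$ maximizes $U_i(\bar x_i,y_i)$ subject to $x_i+p_iy_i+\eta_i(g)k=w_i$, where $w_i>0$, $p_i>0$, and $U_i$ is twice continuously differentiable, strictly concave and increasing in both arguments. The Engel curve $\gamma_i$ gives, for income $W$, the public good consumption $\bar x$ maximizing $U_i(\bar x,y)$ subject to $\bar x+p_iy=W$. Assumption 1: each $\gamma_i$ is continuously differentiable with $\gamma_i'\in[0,1]$. A Nash equilibrium is a profile in which each player's strategy solves her maximization problem given the others'; it is sociable if any player who is indifferent between establishing a link or not establishes it. Under Assumption 1, the network of a non-empty sociable equilibrium is a core-periphery graph: players split into a periphery $\mathcal P$ and a core $\mathcal C$ with no links among periphery players, all core players mutually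 linked in both directions, and every periphery player linking to some core player; the core $\mathcal C(g^* )$ consists of the players providing more than $k$ (it is empty if the network is empty). *)

From HB Require Import structures.
From mathcomp Require Import all_boot all_order all_algebra.
From mathcomp Require Import all_classical all_reals all_analysis.
Set Implicit Arguments. Unset Strict Implicit. Unset Printing Implicit Defensive.
Import Order.TTheory GRing.Theory Num.Theory.
Import numFieldNormedType.Exports.
Local Open Scope ring_scope.
Local Open Scope classical_set_scope.

Definition partial1 {R : realType} (f : R -> R -> R) (a b : R) : R :=
  derive1 (fun t => f t b) a.
Definition partial2 {R : realType} (f : R -> R -> R) (a b : R) : R :=
  derive1 (fun t => f a t) b.

Definition has_partials {R : realType} (f : R -> R -> R) (a b : R) : Prop :=
  derivable (fun t => f t b) a 1 /\ derivable (fun t => f a t) b 1.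

Definition cont2_at {R : realType} (f : R -> R -> R) (z : R * R) : Prop :=
  {for z, continuous (fun u : R * R => f u.1 u.2)}.

Definition C2_on {R : realType} (D : set (R * R)) (f : R -> R -> R) : Prop :=
  open D /\
  forall z, D z ->
    [/\ has_partials f z.1 z.2,
        has_partials (partial1 f) z.1 z.2,
        has_partials (partial2 f) z.1 z.2,
        cont2_at f z /\ cont2_at (partial1 f) z /\ cont2_at (partial2 f) z
      & [/\ cont2_at (partial1 (partial1 f)) z, cont2_at (partial2 (partial1 f)) z,
            cont2_at (partial1 (partial2 f)) z & cont2_at (partial2 (partial2 f)) z]].

Definition quadrant {R : realType} : set (R * R) := [set z | 0 <= z.1 /\ 0 <= z.2].
Definition open_quadrant {R : realType} : set (R * R) := [set z | 0 < z.1 /\ 0 < z.2].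

Definition strictly_concave_quadrant {R : realType} (U : R -> R -> R) : Prop :=
  forall a1 b1 a2 b2 t : R,
    0 <= a1 -> 0 <= b1 -> 0 <= a2 -> 0 <= b2 -> (a1, b1) <> (a2, b2) ->
    0 < t -> t < 1 ->
    t * U a1 b1 + (1 - t) * U a2 b2 < U (t * a1 + (1 - t) * a2) (t * b1 + (1 - t) * b2).

Definition increasing_both {R : realType} (U : R -> R -> R) : Prop :=
  (forall a a' b, 0 <= a -> a < a' -> 0 <= b -> U a b < U a' b) /\
  (forall a b b', 0 <= a -> 0 <= b -> b < b' -> U a b < U a b').

Definition admissible_utility {R : realType} (U : R -> R -> R) : Prop :=
  [/\ C2_on open_quadrant U, strictly_concave_quadrant U & increasing_both U].

(* gamma is the Engel curve of U at price p: for every income W >= 0,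
   gamma W is the public good consumption xb maximizing U xb y
   subject to xb + p y = W, xb >= 0, y >= 0. *)
Definition engel_curve {R : realType} (U : R -> R -> R) (p : R) (gamma : R -> R) : Prop :=
  forall W, 0 <= W ->
    0 <= gamma W /\ gamma W <= W /\
    forall xb, 0 <= xb -> xb <= W -> U xb ((W - xb) / p) <= U (gamma W) ((W - gamma W) / p).

Definition assumption1 {R : realType} (U : R -> R -> R) (p : R) : Prop :=
  exists gamma : R -> R, engel_curve U p gamma /\
    forall W : R, 0 < W ->
      [/\ derivable gamma W 1, {for W, continuous (derive1 gamma)},
          0 <= derive1 gamma W & derive1 gamma W <= 1].

(* eta_i(g): number of links sponsored, for the row gi = g i *)
Definition eta {n : nat} (gi : 'I_n -> bool) : nat := #|finset (fun j => gi j)|.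

Definition spill {R : realType} {n : nat} (gi : 'I_n -> bool) (x : 'I_n -> R) : R :=
  \sum_(j < n) (if gi j then x j else 0).

Definition feasible {R : realType} {n : nat} (k : R) (p w : 'I_n -> R) (i : 'I_n)
    (xi yi : R) (gi : 'I_n -> bool) : Prop :=
  [/\ 0 <= xi, 0 <= yi, gi i = false & xi + p i * yi + (eta gi)%:R * k = w i].

Definition payoff {R : realType} {n : nat} (U : 'I_n -> R -> R -> R) (x : 'I_n -> R)
    (i : 'I_n) (xi yi : R) (gi : 'I_n -> bool) : R :=
  U i (xi + spill gi x) yi.

Definition nash_eq {R : realType} {n : nat} (k : R) (p w : 'I_n -> R)
    (U : 'I_n -> R -> R -> R) (x y : 'I_n -> R) (g : 'I_n -> 'I_n -> bool) : Prop :=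
  forall i : 'I_n,
    feasible k p w i (x i) (y i) (g i) /\
    forall xi yi gi, feasible k p w i xi yi gi ->
      payoff U x i xi yi gi <= payoff U x i (x i) (y i) (g i).

(* Sociable Nash equilibrium: if player i does not link to j, then
   establishing the link ij (keeping her other links) yields strictly
   less than her equilibrium payoff, whatever (xi, yi) she then chooses;
   i.e. no player is indifferent between establishing a link or not
   without establishing it. *)
Definition sociable_nash_eq {R : realType} {n : nat} (k : R) (p w : 'I_n -> R)
    (U : 'I_n -> R -> R -> R) (x y : 'I_n -> R) (g : 'I_n -> 'I_n -> bool) : Prop :=
  nash_eq k p w U x y g /\
  forall i j : 'I_n, j != i -> g i j = false ->
    forall xi yi, feasible k p w i xi yi (fun l => (l == j) || g i l) ->
      payoff U x i xi yi (fun l => (l == j) || g i l) < payoff U x i (x i) (y i) (g i).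

Definition core {R : realType} {n : nat} (k : R) (x : 'I_n -> R)
    (g : 'I_n -> 'I_n -> bool) : {set 'I_n} :=
  if [exists i, exists j, g i j] then finset (fun i => k < x i) else finset.set0.

From Pilot Require Import Defs.
From HB Require Import structures.
From mathcomp Require Import all_boot all_order all_algebra.
From mathcomp Require Import all_classical all_reals all_analysis.
From mathcomp Require Import lra.
Set Implicit Arguments. Unset Strict Implicit. Unset Printing Implicit Defensive.
Import Order.TTheory GRing.Theory Num.Theory.
Import numFieldNormedType.Exports.
Local Open Scope ring_scope.
Local Open Scope classical_set_scope.

(** In a Nash equilibrium, a player i providing at least k links to every
    other player j providing more than k: otherwise i could move k units of
    provision into the link ij and gain x_j - k > 0 units of public good at
    the same private consumption.  A core player therefore sponsors at least
    |C| - 1 links and provides more than k herself, so her budget gives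
    |C| k <= w_i <= omega.  The core size is thus bounded uniformly in n,
    and |C| / n -> 0. *)

Section Links.

Variables (R : realType) (n : nat).
Implicit Types (gi : 'I_n -> bool) (x : 'I_n -> R).

Lemma spill_ge0 gi x : (forall j, 0 <= x j) -> 0 <= spill gi x.
Proof. by move=> x_ge0; apply: sumr_ge0 => j _; case: (gi j). Qed.

Lemma spill_link gi x j :
  gi j = false -> spill (fun l => (l == j) || gi l) x = x j + spill gi x.
Proof.
move=> gij; rewrite /spill (bigD1 j) //= eqxx [in RHS](bigD1 j) //= gij add0r.
by congr (_ + _); apply: eq_bigr => l /negbTE ->.
Qed.

Lemma eta_link gi j :
  gi j = false -> Defs.eta (fun l => (l == j) || gi l) = (Defs.eta gi).+1.
Proof.
move=> gij; rewrite /Defs.eta.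
have -> : finset (fun l => (l == j) || gi l) = j |: finset gi.
  by apply/setP => l; rewrite !inE.
by rewrite cardsU1 inE gij.
Qed.

End Links.

Section NashEquilibrium.

Variables (R : realType) (n : nat) (k : R) (p w : 'I_n -> R).
Variables (U : 'I_n -> R -> R -> R) (x y : 'I_n -> R) (g : 'I_n -> 'I_n -> bool).
Hypothesis U_incr : forall i, increasing_both (U i).
Hypothesis eq_xyg : nash_eq k p w U x y g.

Lemma nash_x_ge0 j : 0 <= x j.
Proof. by have [[]] := eq_xyg j. Qed.

Lemma nash_link_to_high_provider i j :
  j != i -> k <= x i -> k < x j -> g i j.
Proof.
move=> ji kxi kxj; apply/negPn/negP => /negbTE gij.
have [[_ y_ge0 gii budget] best] := eq_xyg i.
pose gi' := fun l => (l == j) || g i l.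
have dev_feasible : feasible k p w i (x i - k) (y i) gi'.
  split => //; first by rewrite subr_ge0.
    by rewrite /gi' gii orbF; apply/negbTE; rewrite eq_sym.
  by rewrite eta_link // -budget -natr1; lra.
have := best _ _ _ dev_feasible; rewrite /payoff spill_link //.
apply/negP; rewrite -ltNge; apply: (U_incr i).1 => //; last by lra.
by rewrite addr_ge0 ?spill_ge0 //; exact: nash_x_ge0.
Qed.

Lemma high_providers_sub_links i :
  k < x i -> [set j | k < x j]%SET \subset i |: [set j | g i j]%SET.
Proof.
move=> kxi; apply/fintype.subsetP => j; rewrite !inE => kxj.
by case: eqVneq => //= ji; apply: nash_link_to_high_provider => //; exact: ltW.
Qed.

Lemma core_card_mulr_le (omega : R) :
  0 < k -> 0 <= omega -> (forall i, 0 < p i) -> (forall i, w i <= omega) ->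
  #|core k x g|%:R * k <= omega.
Proof.
move=> k_gt0 omega_ge0 p_gt0 w_le.
rewrite /core; case: ifP => _; last by rewrite cards0 mul0r.
have [->|[i]] := set_0Vmem [set j | k < x j]%SET; first by rewrite cards0 mul0r.
rewrite inE => kxi.
have [[_ y_ge0 _ budget] _] := eq_xyg i.
have card_le : #|[set j | k < x j]%SET|%:R <= (Defs.eta (g i)).+1%:R :> R.
  rewrite ler_nat; apply: leq_trans (subset_leq_card (high_providers_sub_links kxi)) _.
  by rewrite cardsU1 /Defs.eta; case: (_ \notin _).
have pyi_ge0 : 0 <= p i * y i by rewrite mulr_ge0 // ltW.
apply: le_trans (w_le i); rewrite -budget.
apply: le_trans (ler_wpM2r (ltW k_gt0) card_le) _.
by rewrite -natr1 mulrDl mul1r; lra.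
Qed.

End NashEquilibrium.

Lemma bounded_div_size_cvg0 (R : realType) (N : nat -> nat) (a : nat -> R) (C : R) :
  (forall B : nat, exists M : nat, forall m, (M <= m)%N -> (B <= N m)%N) ->
  (forall m, 0 <= a m <= C) ->
  (fun m => a m / (N m)%:R) @ \oo --> 0.
Proof.
move=> N_unbounded a_bnd; apply/cvgrPdist_le => e e_gt0.
have [M N_large] := N_unbounded (Num.truncn (C / e)).+1.
exists M => // m /N_large N_ge; rewrite sub0r normrN.
have /andP[a_ge0 a_le] := a_bnd m.
have C_lt : C / e < (N m)%:R.
  by apply: lt_le_trans (truncnS_gt _) _; rewrite ler_nat.
have N_gt0 : 0 < (N m)%:R :> R.
  by apply: le_lt_trans C_lt; rewrite divr_ge0 ?(ltW e_gt0) ?(le_trans a_ge0).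
rewrite ger0_norm ?divr_ge0 // ler_pdivrMr //.
by apply: (le_trans a_le); move: C_lt; rewrite ltr_pdivrMr // mulrC => /ltW.
Qed.

Theorem proposition3 (R : realType)
    (N : nat -> nat)                                  (* number of players in game m *)
    (k : R)                                           (* link cost, fixed *)
    (p w : forall m : nat, 'I_(N m) -> R)             (* prices, wealths *)
    (U : forall m : nat, 'I_(N m) -> R -> R -> R)     (* utilities *)
    (omega : R)
    (x y : forall m : nat, 'I_(N m) -> R)             (* equilibrium provisions, private goods *)
    (g : forall m : nat, 'I_(N m) -> 'I_(N m) -> bool) (* equilibrium links *) :
  (forall B : nat, exists M : nat, forall m, (M <= m)%N -> (B <= N m)%N) ->
  0 < k ->
  (forall m i, 0 < p m i) ->
  (forall m i, 0 < w m i) ->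
  (forall m i, admissible_utility (U m i)) ->
  (forall m i, assumption1 (U m i) (p m i)) ->
  0 < omega ->
  (forall m i, w m i <= omega) ->
  (forall m, sociable_nash_eq k (p m) (w m) (U m) (x m) (y m) (g m)) ->
  (fun m => (#|core k (x m) (g m)|%:R / (N m)%:R : R)) @ \oo --> (0 : R).
Proof.
move=> N_unbounded k_gt0 p_gt0 _ adm _ omega_gt0 w_le sne.
apply: (bounded_div_size_cvg0 (C := omega / k)) => // m.
rewrite ler0n /= ler_pdivlMr //.
have [nash_m _] := sne m.
apply: (core_card_mulr_le _ nash_m) => //; last exact: ltW.
by move=> i; have [_ _] := adm m i.
Qed.
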